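(* Let $\Sigma=(\mathcal{U},\mathcal{S})$ be a set system with $m=|\mathcal{U}|$, and let $\mathcal{C}^{*}$ be a minimum-size set cover of $\Sigma$. If a set-cover solution $\mathcal{C}\subseteq\mathcal{S}$ of $\Sigma$ (together with an assignment $\phi$) is stable, then $|\mathcal{C}| \leq O(\log m)\cdot|\mathcal{C}^{*}|$.
   Context: A set system $\Sigma=(\mathcal{U},\mathcal{S})$ consists of a finite universe $\mathcal{U}$ and a finite collection $\mathcal{S}$ of subsets of $\mathcal{U}$; a set-cover solution is a subcollection $\mathcal{C}\subseteq\mathcal{S}$ with $\bigcup_{S\in\mathcal{C}}S=\mathcal{U}$. For a set-cover solution $\mathcal{C}$, an assignment is a map $\phi:\mathcal{U}\to\mathcal{C}$ with $u\in\phi(u)$ for every $u$. For $S\in\mathcal{C}$, its cover set is $\mathtt{cov}(S)=\{u\in\mathcal{U}:\phi(u)=S\}$ (so cover sets of distinct sets are disjoint). The sets of $\mathcal{C}$ are organized into levels $\mathcal{L}_j$, $j\in\mathbb{N}=\{0,1,2,\dots\}$, each set of $\mathcal{C}$ lying in exactly one level, and $A_j=\{u\in\mathcal{U}:\phi(u)\in\mathcal{L}_j\}$. The solution $\mathcal{C}$ is stable if (1) for each $j$ and each $S\in\mathcal{L}_j$, $2^{j}\leq|\mathtt{cov}(S)|<2^{j+1}$; and (2) for each level $\mathcal{L}_j$, there is no $S\in\mathcal{S}$ with $|S\cap A_j|\geq 2^{j+1}$. *)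

From mathcomp Require Import all_boot.
Set Implicit Arguments. Unset Strict Implicit. Unset Printing Implicit Defensive.

Section SetCover.
Variable U : finType.

Definition is_set_cover (S C : {set {set U}}) : Prop :=
  C \subset S /\ \bigcup_(X in C) X = [set: U].

Definition is_min_set_cover (S Cstar : {set {set U}}) : Prop :=
  is_set_cover S Cstar /\
  forall C : {set {set U}}, is_set_cover S C -> #|Cstar| <= #|C|.

Definition is_assignment (C : {set {set U}}) (phi : U -> {set U}) : Prop :=
  forall u : U, phi u \in C /\ u \in phi u.

Definition cov (phi : U -> {set U}) (X : {set U}) : {set U} :=
  [set u | phi u == X].

Definition Alev (phi : U -> {set U}) (lev : {set U} -> nat) (j : nat) : {set U} :=
  [set u | lev (phi u) == j].

Definition stable (S C : {set {set U}}) (phi : U -> {set U})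
    (lev : {set U} -> nat) : Prop :=
  (forall X, X \in C -> 2 ^ lev X <= #|cov phi X| < 2 ^ (lev X).+1) /\
  (forall (j : nat) (X : {set U}), X \in S -> #|X :&: Alev phi lev j| < 2 ^ j.+1).

End SetCover.

(* A set of level j owns at least 2^j elements of A_j through its cover set,
   and cover sets are disjoint, so level j holds at most |A_j| / 2^j sets.
   Any set cover D of (U, S), such as C*, has each of its sets meeting A_j in
   fewer than 2^(j+1) elements, so |A_j| <= 2^(j+1) |D|; hence every level
   holds at most 2 |D| sets.  Finally 2^j <= |cov X| <= m, so only the levels j <= log2 m occur. *)
From mathcomp Require Import all_boot.

Set Implicit Arguments.
Unset Strict Implicit.
Unset Printing Implicit Defensive.

Lemma card_bigcup_le (T : finType) (I : Type) (r : seq I) (P : pred I)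
    (F : I -> {set T}) :
  #|\bigcup_(i <- r | P i) F i| <= \sum_(i <- r | P i) #|F i|.
Proof.
apply: (big_ind2 (fun (A : {set T}) n => #|A| <= n)) => //.
  by rewrite cards0.
by move=> A n B k leA leB; exact: leq_trans (leq_card_setU A B) (leq_add leA leB).
Qed.

Lemma sum_card_fibers (T T' : finType) (f : T -> T') (D : {pred T'}) :
  \sum_(y in D) #|[set x | f x == y]| = #|[set x | f x \in D]|.
Proof.
rewrite -sum1dep_card (partition_big f (mem D)) //=.
apply: eq_bigr => y Dy; rewrite -sum1dep_card; apply: eq_bigl => x.
by case: eqP => [->|]; rewrite ?andbT ?andbF.
Qed.

Lemma card_le_cover_mul (T : finType) (D : {set {set T}}) (A : {set T}) k :
    \bigcup_(Y in D) Y = [set: T] -> (forall Y, Y \in D -> #|Y :&: A| <= k) ->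
  #|A| <= k * #|D|.
Proof.
move=> coverD leYA.
have subA : A \subset \bigcup_(Y in D) (Y :&: A).
  apply/subsetP => x Ax.
  have /bigcupP[Y DY Yx] : x \in \bigcup_(Y in D) Y by rewrite coverD inE.
  by apply/bigcupP; exists Y; rewrite // inE Yx.
apply: (leq_trans (subset_leq_card subA)).
apply: (leq_trans (card_bigcup_le _ _ _)).
by rewrite mulnC -sum_nat_const; apply: leq_sum.
Qed.

Section StableSolution.
Variables (U : finType) (S C : {set {set U}}).
Variables (phi : U -> {set U}) (lev : {set U} -> nat).
Hypothesis stableC : stable S C phi lev.

Lemma pow_mul_card_level_le (j : nat) :
  2 ^ j * #|[set X in C | lev X == j]| <= #|Alev phi lev j|.
Proof.
set Cj := [set X in C | lev X == j].
rewrite mulnC -sum_nat_const.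
apply: (@leq_trans (\sum_(X in Cj) #|cov phi X|)).
  apply: leq_sum => X; rewrite inE => /andP[CX /eqP <-].
  by case: stableC => /(_ X CX) /andP[].
rewrite sum_card_fibers; apply: subset_leq_card; apply/subsetP => u.
by rewrite !inE => /andP[].
Qed.

Lemma card_Alev_le D (j : nat) :
  is_set_cover S D -> #|Alev phi lev j| <= 2 ^ j.+1 * #|D|.
Proof.
case=> subDS coverD; apply: card_le_cover_mul => // Y DY.
by case: stableC => _ /(_ j Y (subsetP subDS Y DY)) /ltnW.
Qed.

Lemma card_level_le D (j : nat) :
  is_set_cover S D -> #|[set X in C | lev X == j]| <= 2 * #|D|.
Proof.
move=> coverD; rewrite -(leq_pmul2l (expn_gt0 2 j)).
apply: (leq_trans (pow_mul_card_level_le j)).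
by apply: (leq_trans (card_Alev_le j coverD)); rewrite expnSr mulnA.
Qed.

Lemma lev_le_trunc_log X : X \in C -> lev X <= trunc_log 2 #|U|.
Proof.
move=> CX; apply: trunc_log_max => //.
by case: stableC => /(_ X CX) /andP[le_cov _] _; exact: leq_trans le_cov (max_card _).
Qed.

Lemma card_stable_le_cover D :
  is_set_cover S D -> #|C| <= 2 * (trunc_log 2 #|U|).+1 * #|D|.
Proof.
move=> coverD; set L := trunc_log 2 #|U|.
rewrite -sum1_card (partition_big (fun X => @inord L (lev X)) predT) //=.
apply: (@leq_trans (\sum_(j < L.+1) 2 * #|D|)); last first.
  by rewrite sum_nat_const card_ord mulnA [L.+1 * 2]mulnC.
apply: leq_sum => j _; rewrite sum1_card.
apply: (leq_trans _ (card_level_le j coverD)); apply: subset_leq_card.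
apply/subsetP => X; rewrite !inE => /andP[CX /eqP <-].
by rewrite CX inordK ?eqxx //; exact: lev_le_trunc_log CX.
Qed.

End StableSolution.

(* log m is read as (trunc_log 2 m).+1, so that the bound is meaningful
   also for m = 1. *)
Theorem theorem1 :
  exists c : nat,
  forall (U : finType) (S C Cstar : {set {set U}})
         (phi : U -> {set U}) (lev : {set U} -> nat),
    is_set_cover S C ->
    is_assignment C phi ->
    stable S C phi lev ->
    is_min_set_cover S Cstar ->
    #|C| <= c * (trunc_log 2 #|U|).+1 * #|Cstar|.
Proof.
exists 2 => U S C Cstar phi lev _ _ stableC [coverCstar _].
exact: (card_stable_le_cover stableC coverCstar).
Qed.
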